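(* Let $k\geq1$ and consider real $2k\times2k$ matrices $K,P,A$ where $K$ is an invertible skew-symmetric matrix, $P$ is an orthogonal matrix, $A=\mathrm{diag}(-\alpha_1^2,\dots,-\alpha_{2k}^2)$ with all $\alpha_i\neq0$, and let $\alpha=\pm\sqrt{\alpha_1^2+\dots+\alpha_{2k}^2}$. Suppose $K^2=P^{-1}AP+A\quad\text{and}\quad \alpha K=AP-P^{-1}A.$ Then $k=1$, and there exist $\epsilon,\eta\in\{1,-1\}$ such that $A=\begin{pmatrix}-\alpha_1^2&0\\0&-\alpha_2^2\end{pmatrix},\quad K=\begin{pmatrix}0&\epsilon\sqrt{\alpha_1^2+\alpha_2^2}\\-\epsilon\sqrt{\alpha_1^2+\alpha_2^2}&0\end{pmatrix},\quad P=\begin{pmatrix}0&-\eta\epsilon\\\eta\epsilon&0\end{pmatrix}.$ *)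

From HB Require Import structures.
From mathcomp Require Import all_boot all_order all_algebra.
From mathcomp Require Import reals.
Set Implicit Arguments. Unset Strict Implicit. Unset Printing Implicit Defensive.
Import Order.TTheory GRing.Theory Num.Theory.
Local Open Scope ring_scope.

(* The n x n matrix whose top-left 2x2 block is [[a, b], [c, d]] and whose
   other entries are 0; used with n = 2 (after k = 1 is established). *)
Definition mx2 (R : ringType) (n : nat) (a b c d : R) : 'M[R]_n :=
  \matrix_(i < n, j < n)
    if ((i : nat) == 0%N) && ((j : nat) == 0%N) then a
    else if ((i : nat) == 0%N) && ((j : nat) == 1%N) then b
    else if ((i : nat) == 1%N) && ((j : nat) == 0%N) then c
    else if ((i : nat) == 1%N) && ((j : nat) == 1%N) then d
    else 0.

(* A = diag(-alpha_1^2, ..., -alpha_n^2), with alpha indexed from 0. *)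
Definition diag_negsq (R : ringType) (n : nat) (al : nat -> R) : 'M[R]_n :=
  diag_mx (\row_(i < n) - (al i) ^+ 2).

From HB Require Import structures.
From mathcomp Require Import all_boot all_order all_algebra.
From mathcomp Require Import reals.
From mathcomp Require Import zify.
From mathcomp.algebra_tactics Require Import ring.
Import Order.TTheory GRing.Theory Num.Theory.
Local Open Scope ring_scope.

(* Put b_i = alpha_i^2 and S = sum_i b_i = alpha^2.  The (i,i) entries of
   alpha^2 K^2 = (AP - P^T A)^2 and of alpha^2 (P^T A P + A) give
     sum_l (b_l P_li - b_i P_il)^2 = S (sum_l b_l P_li^2 + b_i).
   As the rows and columns of P are unit vectors, this makes the nonnegative
   numbers
     T_il = b_l / ((S - b_l) b_i^2) * ((S - b_l) P_li + b_i P_il)^2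
   sum to S * sum_l (1/(S - b_l) - 1/b_l).  Pairing l with l+1 (mod 2k) and
   using S - b_l >= b_(l+1), strictly when 2k > 2, this sum is <= 0, and < 0
   unless 2k = 2.  Hence k = 1 and every T_il vanishes, i.e.
   (S - b_l) P_li + b_i P_il = 0; in size 2 this forces P = [[0, -s], [s, 0]]
   with s = 1 or -1, and alpha K = AP - P^T A then gives K. *)

Set Implicit Arguments.
Unset Strict Implicit.

Lemma ordS_neq n (l : 'I_n) : (1 < n)%N -> ordS l != l.
Proof.
move=> n_gt1; apply/eqP => /(congr1 val) /=.
case: (ltngtP l.+1 n) => [lt | gt | eq].
- by rewrite modn_small // => /esym/n_Sn.
- by have := ltn_ord l; lia.
- by rewrite eq modnn => l0; move: n_gt1; rewrite -eq -l0.
Qed.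

Lemma bigD2 (R : nmodType) n (F : 'I_n -> R) (i j : 'I_n) : i != j ->
  \sum_m F m = F i + F j + \sum_(m | (m != i) && (m != j)) F m.
Proof.
move=> ij; rewrite (bigD1 i) // (bigD1 j) 1?eq_sym //= addrA.
by congr (_ + _); apply: eq_bigl => m; rewrite andbC.
Qed.

Lemma ler_pair_sum (R : numDomainType) n (F : 'I_n -> R) (i j : 'I_n) :
  (forall m, 0 <= F m) -> i != j -> F i + F j <= \sum_m F m.
Proof. by move=> F_ge0 ij; rewrite (bigD2 F ij) lerDl sumr_ge0. Qed.

Lemma ltr_pair_sum (R : numDomainType) n (F : 'I_n -> R) (i j : 'I_n) :
  (2 < n)%N -> (forall m, 0 < F m) -> i != j -> F i + F j < \sum_m F m.
Proof.
move=> n_gt2 F_gt0 ij; rewrite (bigD2 F ij) ltrDl.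
have /subsetPn[m _ m_out] : ~~ ([set: 'I_n] \subset [set i; j]).
  by apply/negP => /subset_leq_card; rewrite cardsT card_ord cards2; lia.
rewrite !inE negb_or in m_out.
rewrite (bigD1 m) //=; apply: ltr_pwDl => //.
by apply: sumr_ge0 => l _; apply: ltW.
Qed.

Section DiagonalIdentity.

Variables (R : realFieldType) (n : nat) (b : 'I_n -> R) (P : 'M[R]_n).
Hypothesis n_gt1 : (1 < n)%N.
Hypothesis b_gt0 : forall i, 0 < b i.
Hypothesis row_norm1 : forall i, \sum_l P i l ^+ 2 = 1.
Hypothesis col_norm1 : forall l, \sum_i P i l ^+ 2 = 1.
Hypothesis diag_identity : forall i,
  \sum_l (b l * P l i - b i * P i l) ^+ 2
    = (\sum_m b m) * (\sum_l b l * P l i ^+ 2 + b i).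

Local Notation S := (\sum_m b m).

Let b_ge0 i : 0 <= b i. Proof. exact: ltW. Qed.
Let b_neq0 i : b i != 0. Proof. by rewrite gt_eqF. Qed.

Lemma succ_le_compl l : b (ordS l) <= S - b l.
Proof. by rewrite lerBrDl ler_pair_sum // eq_sym ordS_neq. Qed.

Lemma compl_gt0 l : 0 < S - b l.
Proof. exact: lt_le_trans (b_gt0 _) (succ_le_compl l). Qed.

Let compl_neq0 l : S - b l != 0. Proof. by rewrite gt_eqF ?compl_gt0. Qed.

Lemma sum_inv_compl_le : \sum_l (S - b l)^-1 <= \sum_l (b l)^-1.
Proof.
rewrite [leRHS](reindex_inj (@ordS_inj n)) /=; apply: ler_sum => l _.
by rewrite lef_pV2 ?posrE ?b_gt0 ?compl_gt0 ?succ_le_compl.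
Qed.

Lemma sum_inv_compl_lt : (2 < n)%N -> \sum_l (S - b l)^-1 < \sum_l (b l)^-1.
Proof.
move=> n_gt2; rewrite [ltRHS](reindex_inj (@ordS_inj n)) /=.
apply: ltr_sum => [|l _].
  by apply/hasP; exists (Ordinal (ltnW n_gt1)); rewrite ?mem_index_enum.
rewrite ltf_pV2 ?posrE ?b_gt0 ?compl_gt0 // ltrBrDl.
by rewrite ltr_pair_sum // eq_sym ordS_neq.
Qed.

Definition twist_defect i l :=
  b l / ((S - b l) * b i ^+ 2) * ((S - b l) * P l i + b i * P i l) ^+ 2.

Lemma twist_defect_ge0 i l : 0 <= twist_defect i l.
Proof.
by rewrite mulr_ge0 ?sqr_ge0 ?divr_ge0 ?mulr_ge0 ?sqr_ge0 ?ltW ?compl_gt0.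
Qed.

Lemma sum_twist_defect_row i :
  \sum_l twist_defect i l = \sum_l b l / (S - b l) * P i l ^+ 2 - (S - b i) / b i.
Proof.
under eq_bigr => l _ do have -> : twist_defect i l =
    (S * (b l * P l i ^+ 2) - (b l * P l i - b i * P i l) ^+ 2
      + b i ^+ 2 * P i l ^+ 2) / b i ^+ 2 + b l / (S - b l) * P i l ^+ 2
  by rewrite /twist_defect; field; rewrite compl_neq0 b_neq0.
rewrite big_split /= -mulr_suml !big_split /= sumrN -!mulr_sumr.
by rewrite diag_identity row_norm1; field.
Qed.

Lemma sum_twist_defect :
  \sum_i \sum_l twist_defect i l = S * \sum_l ((S - b l)^-1 - (b l)^-1).
Proof.
under eq_bigr do rewrite sum_twist_defect_row.
rewrite sumrB exchange_big /=.
under eq_bigr do rewrite -mulr_sumr col_norm1 mulr1.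
by rewrite -sumrB mulr_sumr; apply: eq_bigr => l _; field; rewrite b_neq0 compl_neq0.
Qed.

Lemma sum_twist_defect_eq0 : \sum_i \sum_l twist_defect i l = 0.
Proof.
apply/eqP; rewrite eq_le; apply/andP; split; last first.
  by apply: sumr_ge0 => i _; apply: sumr_ge0 => l _; apply: twist_defect_ge0.
rewrite sum_twist_defect mulr_ge0_le0 ?sumr_ge0 //.
by rewrite sumrB subr_le0 sum_inv_compl_le.
Qed.

Lemma dim_le2 : (n <= 2)%N.
Proof.
rewrite leqNgt; apply/negP => /sum_inv_compl_lt; rewrite -subr_lt0 -sumrB => lt0.
have S_gt0 : 0 < S.
  by have := compl_gt0 (Ordinal (ltnW n_gt1)); rewrite subr_gt0; apply: lt_trans.
have /eqP := sum_twist_defect_eq0.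
by rewrite sum_twist_defect mulf_eq0 (gt_eqF S_gt0) (lt_eqF lt0).
Qed.

Lemma twisted_antisym i l : (S - b l) * P l i + b i * P i l = 0.
Proof.
have row_eq0 j : \sum_l twist_defect j l = 0.
  apply: (psumr_eq0P _ sum_twist_defect_eq0) => // k _.
  by apply: sumr_ge0 => l' _; apply: twist_defect_ge0.
have /eqP : twist_defect i l = 0.
  by apply: (psumr_eq0P _ (row_eq0 i)) => // l' _; apply: twist_defect_ge0.
have coef_neq0 : b l / ((S - b l) * b i ^+ 2) != 0.
  by rewrite mulf_neq0 ?invr_eq0 ?mulf_neq0 ?expf_neq0.
by rewrite mulf_eq0 (negbTE coef_neq0) sqrf_eq0 => /eqP.
Qed.

End DiagonalIdentity.

Lemma orthogonal_invmx (R : comUnitRingType) n (P : 'M[R]_n) :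
  P^T *m P = 1%:M -> invmx P = P^T.
Proof. by move=> PTP; rewrite -[invmx P]mul1mx -PTP mulmxK // (mulmx1_unit PTP).2. Qed.

Lemma orthogonal_col_norm1 (R : pzRingType) n (P : 'M[R]_n) :
  P^T *m P = 1%:M -> forall l, \sum_i P i l ^+ 2 = 1.
Proof.
move=> PTP l; have := congr1 (fun M : 'M[R]_n => M l l) PTP.
rewrite !mxE eqxx mulr1n => <-.
by apply: eq_bigr => i _; rewrite mxE.
Qed.

Lemma orthogonal_row_norm1 (R : comPzRingType) n (P : 'M[R]_n) :
  P^T *m P = 1%:M -> forall i, \sum_l P i l ^+ 2 = 1.
Proof.
move=> /mulmx1C PPT i; rewrite -(@orthogonal_col_norm1 _ _ P^T _ i) ?trmxK //.
by apply: eq_bigr => l _; rewrite mxE.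
Qed.

Section SkewPart.

Variables (R : comPzRingType) (n : nat) (b : 'I_n -> R) (P K : 'M[R]_n) (alpha : R).

Local Notation A := (diag_mx (\row_i - b i)).

Hypothesis sq_eq : K *m K = P^T *m A *m P + A.
Hypothesis skew_eq : alpha *: K = A *m P - P^T *m A.

Lemma scaled_entry i j : alpha * K i j = b j * P j i - b i * P i j.
Proof.
have := congr1 (fun M : 'M[R]_n => M i j) skew_eq.
by rewrite mul_diag_mx mul_mx_diag !mxE => ->; ring.
Qed.

Lemma diag_identity_of_sq i :
  \sum_l (b l * P l i - b i * P i l) ^+ 2
    = alpha ^+ 2 * (\sum_l b l * P l i ^+ 2 + b i).
Proof.
have conj_ii : (P^T *m A *m P) i i = - \sum_l b l * P l i ^+ 2.
  by rewrite mul_mx_diag mxE -sumrN; apply: eq_bigr => l _; rewrite !mxE; ring.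
have KK_ii := congr1 (fun M : 'M[R]_n => M i i) sq_eq.
rewrite [RHS]mxE conj_ii !mxE eqxx mulr1n in KK_ii.
have -> : \sum_l (b l * P l i - b i * P i l) ^+ 2 = - alpha ^+ 2 * (K *m K) i i.
  rewrite mxE mulr_sumr; apply: eq_bigr => l _.
  by rewrite mulNr expr2 mulrACA !scaled_entry; ring.
by rewrite mxE KK_ii; ring.
Qed.

End SkewPart.

Lemma mx2_eta (R : nzRingType) (M : 'M[R]_2) :
  M = mx2 2 (M 0 0) (M 0 1) (M 1 0) (M 1 1).
Proof.
apply/matrixP => -[[|[|//]] ?] [[|[|//]] ?]; rewrite !mxE /=.
all: by congr (M _ _); apply: val_inj.
Qed.

Lemma sum_ord2 (R : nmodType) (F : 'I_2 -> R) : \sum_i F i = F 0 + F 1.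
Proof. by rewrite big_ord_recl big_ord1; congr (F _ + F _); apply: val_inj. Qed.

Lemma antidiag_of_twisted (R : realFieldType) (b : 'I_2 -> R) (P : 'M[R]_2) :
  (forall i, 0 < b i) -> (forall l, \sum_i P i l ^+ 2 = 1) ->
  (forall i l, (\sum_m b m - b l) * P l i + b i * P i l = 0) ->
  exists2 s : R, (s = 1 \/ s = -1) & P = mx2 2 0 (- s) s 0.
Proof.
move=> b_gt0 col_norm1; rewrite sum_ord2 => twisted.
have S_neq0 : b 0 + b 1 != 0 by rewrite gt_eqF ?addr_gt0.
have P00 : P 0 0 = 0.
  by apply: (mulfI S_neq0); rewrite mulr0 -(twisted 0 0); ring.
have P11 : P 1 1 = 0.
  by apply: (mulfI S_neq0); rewrite mulr0 -(twisted 1 1); ring.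
have P01 : P 0 1 = - P 1 0.
  apply: (mulfI (lt0r_neq0 (b_gt0 1))); apply/eqP; rewrite -subr_eq0; apply/eqP.
  by rewrite -(twisted 1 0); ring.
have /eqP : P 1 0 ^+ 2 = 1 by rewrite -(col_norm1 0) sum_ord2 P00 expr0n add0r.
rewrite sqrf_eq1 => /orP s_unit.
exists (P 1 0); first by case: s_unit => /eqP; [left | right].
by rewrite [LHS]mx2_eta P00 P11 P01.
Qed.

Lemma skew_of_antidiag (R : fieldType) (b : 'I_2 -> R) (P K : 'M[R]_2) (alpha s : R) :
  alpha != 0 -> alpha ^+ 2 = b 0 + b 1 -> P = mx2 2 0 (- s) s 0 ->
  (forall i j, alpha * K i j = b j * P j i - b i * P i j) ->
  K = mx2 2 0 (alpha * s) (- (alpha * s)) 0.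
Proof.
move=> alpha_neq0 alpha2 -> scaled_entry.
rewrite [LHS]mx2_eta; congr mx2; apply: (mulfI alpha_neq0);
  by rewrite scaled_entry !mxE /= ?mulrN ?mulrA -?expr2 ?alpha2; ring.
Qed.

Unset Implicit Arguments.
Set Strict Implicit.

Theorem lemma4p3 (R : realType) (k : nat) (hk : (1 <= k)%N)
  (K P : 'M[R]_(2 * k)) (al : nat -> R) (alpha : R)
  (hal : forall i : nat, (i < 2 * k)%N -> al i != 0)
  (hKskew : K^T = - K) (hKinv : K \in unitmx)
  (hPorth : P^T *m P = 1%:M)
  (halpha : alpha = Num.sqrt (\sum_(i < 2 * k) al i ^+ 2) \/
            alpha = - Num.sqrt (\sum_(i < 2 * k) al i ^+ 2))
  (h1 : K *m K = invmx P *m diag_negsq (2 * k) al *m P + diag_negsq (2 * k) al)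
  (h2 : alpha *: K = diag_negsq (2 * k) al *m P - invmx P *m diag_negsq (2 * k) al) :
  k = 1%N /\
  exists eps eta : R, (eps = 1 \/ eps = -1) /\ (eta = 1 \/ eta = -1) /\
    diag_negsq (2 * k) al = mx2 (2 * k) (- al 0%N ^+ 2) 0 0 (- al 1%N ^+ 2) /\
    K = mx2 (2 * k) 0 (eps * Num.sqrt (al 0%N ^+ 2 + al 1%N ^+ 2))
                      (- (eps * Num.sqrt (al 0%N ^+ 2 + al 1%N ^+ 2))) 0 /\
    P = mx2 (2 * k) 0 (- (eta * eps)) (eta * eps) 0.
Proof.
rewrite (orthogonal_invmx hPorth) in h1 h2.
pose b (i : 'I_(2 * k)) := al i ^+ 2.
have b_gt0 i : 0 < b i by rewrite lt0r sqr_ge0 andbT expf_neq0 ?hal.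
have alpha2 : alpha ^+ 2 = \sum_i b i.
  have : 0 <= \sum_i b i by apply: sumr_ge0 => i _; apply: ltW.
  by case: halpha => -> ?; rewrite ?sqrrN sqr_sqrtr.
have diag_id := @diag_identity_of_sq _ _ b P K alpha h1 h2.
rewrite alpha2 in diag_id.
have n_gt1 : (1 < 2 * k)%N by lia.
have row1 := orthogonal_row_norm1 hPorth; have col1 := orthogonal_col_norm1 hPorth.
have k1 : k = 1%N by have := dim_le2 n_gt1 b_gt0 row1 col1 diag_id; lia.
split=> //; subst k.
have [s s_unit P_eq] :=
  antidiag_of_twisted b_gt0 col1 (twisted_antisym n_gt1 b_gt0 row1 col1 diag_id).
have b01 : b 0 + b 1 = al 0%N ^+ 2 + al 1%N ^+ 2 by [].
rewrite sum_ord2 b01 in alpha2 halpha.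
set r := Num.sqrt _ in halpha *.
have [u u_unit alpha_eq] : exists2 u : R, (u = 1 \/ u = -1) & alpha = u * r.
  case: halpha => ->; first by exists 1; [left | rewrite mul1r].
  by exists (-1); [right | rewrite mulN1r].
have alpha_neq0 : alpha != 0 by rewrite -sqrf_eq0 alpha2 -b01 gt_eqF ?addr_gt0.
have K_eq := skew_of_antidiag alpha_neq0 alpha2 P_eq (@scaled_entry _ _ b P K alpha h2).
exists (s * u), u; split; [|split=> //; split; [|split]].
- by case: s_unit u_unit => -> [] ->; rewrite ?mul1r ?mulN1r ?opprK; auto.
- by rewrite /diag_negsq [LHS]mx2_eta !mxE.
- by rewrite K_eq alpha_eq; congr mx2; ring.
- have -> : u * (s * u) = s by case: u_unit => ->; ring.
  exact: P_eq.
Qed.
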